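(* Let $1\leq\delta\leq k$, let $V=\mathbb{F}_{q^k}\times\mathbb{F}_{q^k}$ viewed as a $2k$-dimensional $\mathbb{F}_q$-space, and let $\mathcal{G}=\mathcal{G}_{2k,k,\delta}$ be the set of all $\mathbb{F}_q$-subspaces $$G(a_0,\dots,a_{k-\delta})=\Big\{\big(x,\textstyle\sum_{i=0}^{k-\delta}a_ix^{q^i}\big):x\in\mathbb{F}_{q^k}\Big\},\qquad a_0,\dots,a_{k-\delta}\in\mathbb{F}_{q^k}.$$ Let $\perp$ denote orthogonality with respect to the nondegenerate $\mathbb{F}_q$-bilinear form $\langle(a,b),(x,y)\rangle=\mathrm{Tr}(ax+by)$, where $\mathrm{Tr}(z)=z+z^q+\dots+z^{q^{k-1}}$. Then there is an $\mathbb{F}_q$-linear bijection $\phi\colon V\to V$ with $\phi(X^\perp)\in\mathcal{G}$ for all $X\in\mathcal{G}$ and $\{\phi(X^\perp):X\in\mathcal{G}\}=\mathcal{G}$; consequently $\mathcal{G}$ is invariant under a correlation of the projective geometry $\mathrm{PG}(V)$. Moreover, every correlation of $\mathrm{PG}(V)$ mapping $\mathcal{G}$ onto itself fixes the subspace $S=\{0\}\times\mathbb{F}_{q^k}$.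
   Context: A correlation of $\mathrm{PG}(V)$ is an inclusion-reversing bijection of the set of subspaces of $V$ induced by a semilinear map composed with taking orthogonal complements (equivalently, an inclusion-reversing bijection of the subspace lattice). Each element of $\mathcal{G}$ is a $k$-dimensional subspace. *)

From HB Require Import structures.
From mathcomp Require Import all_boot all_order all_algebra all_field.
Set Implicit Arguments. Unset Strict Implicit. Unset Printing Implicit Defensive.
Import GRing.Theory.
Local Open Scope ring_scope.

Section Defs.
Variable L : finFieldType.
Variable q : nat.

(* The subfield F_q = {c | c^q = c} (when #|L| = q^k, q a power of char L). *)
Definition Fq : {set L} := [set c : L | c ^+ q == c].

Definition vadd (u v : L * L) : L * L := (u.1 + v.1, u.2 + v.2).
Definition vscale (c : L) (u : L * L) : L * L := (c * u.1, c * u.2).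

Definition is_subspace (S : {set L * L}) : Prop :=
  [/\ (0, 0) \in S,
      (forall u v, u \in S -> v \in S -> vadd u v \in S) &
      (forall c u, c \in Fq -> u \in S -> vscale c u \in S)].

Definition Fq_linear (phi : L * L -> L * L) : Prop :=
  (forall u v, phi (vadd u v) = vadd (phi u) (phi v)) /\
  (forall c u, c \in Fq -> phi (vscale c u) = vscale c (phi u)).

Definition Tr (k : nat) (z : L) : L := \sum_(i < k) z ^+ (q ^ i)%N.

Definition form (k : nat) (u v : L * L) : L := Tr k (u.1 * v.1 + u.2 * v.2).

Definition perp (k : nat) (X : {set L * L}) : {set L * L} :=
  [set v | [forall u in X, form k u v == 0]].

Definition Gsub (k delta : nat) (a : (k - delta).+1.-tuple L) : {set L * L} :=
  [set (x, \sum_(i < (k - delta).+1) tnth a i * x ^+ (q ^ i)%N) | x : L].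

Definition calG (k delta : nat) : {set {set L * L}} :=
  [set Gsub a | a : (k - delta).+1.-tuple L].

Definition Ssub : {set L * L} := [set u : L * L | u.1 == 0].

(* A correlation of PG(V): an inclusion-reversing bijection of the lattice
   of F_q-subspaces of V (values of f on non-subspaces are irrelevant). *)
Definition correlation (f : {set L * L} -> {set L * L}) : Prop :=
  [/\ (forall A, is_subspace A -> is_subspace (f A)),
      (forall A B, is_subspace A -> is_subspace B -> f A = f B -> A = B),
      (forall B, is_subspace B -> exists2 A, is_subspace A & f A = B) &
      (forall A B, is_subspace A -> is_subspace B ->
         (A \subset B) = (f B \subset f A))].
End Defs.

From Pilot Require Import Defs.
From HB Require Import structures.
From mathcomp Require Import all_boot all_order all_algebra all_field.
From mathcomp Require Import ring zify.
Set Implicit Arguments. Unset Strict Implicit. Unset Printing Implicit Defensive.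
Import GRing.Theory.
Local Open Scope ring_scope.

(* The trace form identifies V with its dual, and for it the adjoint of
   x |-> a x^(q^i) is v |-> (a v)^(q^(k-i)).  Hence the orthogonal complement of
   the graph G(a) of x |-> sum_i a_i x^(q^i) contains the graph of
   v |-> - sum_i (a_i v)^(q^(k-i)), and equals it because |A| |A^perp| = |V| for
   every F_q-subspace A.  The map phi : (x, y) |-> (y^(q^delta), -x) turns that
   graph into G(b) with b_j = a_(k-delta-j)^(q^(delta+j)), and a |-> b is onto,
   so X |-> phi(X^perp) is a correlation mapping the family onto itself.
   Conversely, let f be a correlation with f(G) = G.  Each G(a) is a complement
   of S, so f(S) meets every f(G(a)) trivially; as every vector (x, y) with
   x <> 0 lies on the graph of x' |-> (y/x) x', which is some f(G(a)), we get
   f(S) <= S.  Then L x pr_2(f(S)) contains f(S) and some f(G(a)) = L x 0, hence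
   is the image of a subspace of S /\ G(a) = 0, i.e. it is V; so f(S) = S. *)

Section FiniteField.
Variables (L : finFieldType) (p e k : nat).
Hypotheses (p_prime : prime p) (e_gt0 : (0 < e)%N)
  (cardL : #|L| = ((p ^ e) ^ k)%N).
Local Notation q := (p ^ e)%N.

(** * Frobenius powers and the trace *)

Lemma q_gt1 : (1 < q)%N.
Proof. by rewrite -[1%N](expn0 p) ltn_exp2l ?prime_gt1. Qed.

Lemma q_gt0 : (0 < q)%N.
Proof. exact: ltnW q_gt1. Qed.

Lemma k_gt0 : (0 < k)%N.
Proof.
by case: k cardL => // cardL0; have := card_finNzRing_gt1 L; rewrite cardL0.
Qed.

Lemma pchar_L : p \in [pchar L].
Proof. by apply: (@card_finPcharP _ p (e * k)); rewrite // expnM. Qed.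

Lemma frob0 m : (0 : L) ^+ (q ^ m) = 0.
Proof. by rewrite expr0n expn_eq0 eqn0Ngt q_gt0. Qed.

Lemma frobD m (x y : L) : (x + y) ^+ (q ^ m) = x ^+ (q ^ m) + y ^+ (q ^ m).
Proof. by apply: exprDn_pchar; rewrite -expnM pnatX (pnatE _ p_prime) pchar_L. Qed.

Lemma frobN m (x : L) : (- x) ^+ (q ^ m) = - x ^+ (q ^ m).
Proof. by apply/eqP; rewrite -subr_eq0 opprK -frobD addNr frob0. Qed.

Lemma frob_sum m (I : Type) (r : seq I) (P : pred I) (F : I -> L) :
  (\sum_(i <- r | P i) F i) ^+ (q ^ m) = \sum_(i <- r | P i) F i ^+ (q ^ m).
Proof. exact: (big_morph _ (frobD m) (frob0 m)). Qed.

Lemma frob_k (x : L) : x ^+ (q ^ k) = x.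
Proof. by rewrite -cardL expf_card. Qed.

Lemma frob_kB i (x : L) : (i <= k)%N -> (x ^+ (q ^ i)) ^+ (q ^ (k - i)) = x.
Proof. by move=> le_ik; rewrite -exprM -expnD subnKC ?frob_k. Qed.

Lemma Fq_frob (c : L) m : c \in Fq L q -> c ^+ (q ^ m) = c.
Proof.
rewrite inE => /eqP cq; elim: m => [|m IHm]; first by rewrite expr1.
by rewrite expnS exprM cq IHm.
Qed.

Lemma FqP (c : L) : reflect (c ^+ (q ^ 1) = c) (c \in Fq L q).
Proof. by rewrite inE expn1; apply: eqP. Qed.

Lemma Fq0 : (0 : L) \in Fq L q.
Proof. exact/FqP/frob0. Qed.

Lemma Fq1 : (1 : L) \in Fq L q.
Proof. by rewrite inE expr1n. Qed.

Lemma FqD (a b : L) : a \in Fq L q -> b \in Fq L q -> a + b \in Fq L q.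
Proof. by move=> /FqP Fq_a /FqP Fq_b; apply/FqP; rewrite frobD Fq_a Fq_b. Qed.

Lemma FqN (a : L) : a \in Fq L q -> - a \in Fq L q.
Proof. by move=> /FqP Fq_a; apply/FqP; rewrite frobN Fq_a. Qed.

Lemma FqM (a b : L) : a \in Fq L q -> b \in Fq L q -> a * b \in Fq L q.
Proof. by rewrite !inE exprMn => /eqP-> /eqP->. Qed.

Lemma FqV (a : L) : a \in Fq L q -> a^-1 \in Fq L q.
Proof. by rewrite !inE exprVn => /eqP->. Qed.

Local Notation Tr := (@Defs.Tr L q k).

Lemma Tr0 : Tr 0 = 0.
Proof. by rewrite /Defs.Tr big1 // => i _; rewrite frob0. Qed.

Lemma TrD x y : Tr (x + y) = Tr x + Tr y.
Proof. by rewrite /Defs.Tr -big_split; apply: eq_bigr => i _; rewrite frobD. Qed.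

Lemma TrN x : Tr (- x) = - Tr x.
Proof. by rewrite /Defs.Tr -sumrN; apply: eq_bigr => i _; rewrite frobN. Qed.

Lemma Tr_sum (I : Type) (r : seq I) (P : pred I) (F : I -> L) :
  Tr (\sum_(i <- r | P i) F i) = \sum_(i <- r | P i) Tr (F i).
Proof. exact: (big_morph _ TrD Tr0). Qed.

Lemma TrZ c x : c \in Fq L q -> Tr (c * x) = c * Tr x.
Proof.
move=> Fq_c; rewrite /Defs.Tr mulr_sumr; apply: eq_bigr => i _.
by rewrite exprMn (Fq_frob _ Fq_c).
Qed.

Lemma Tr_frob1 x : Tr (x ^+ q) = Tr x.
Proof.
rewrite /Defs.Tr; case: k k_gt0 frob_k => // k' _ frob_k'.
rewrite big_ord_recr big_ord_recl /= expn0 expr1 -{3}(frob_k' x) addrC.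
congr (_ + _); first by rewrite expnS exprM.
by apply: eq_bigr => i _; rewrite /bump /= add1n expnS exprM.
Qed.

Lemma Tr_frob m x : Tr (x ^+ (q ^ m)) = Tr x.
Proof.
elim: m => [|m IHm]; first by rewrite expr1.
by rewrite expnSr exprM Tr_frob1 IHm.
Qed.

Lemma Tr_Fq x : Tr x \in Fq L q.
Proof.
apply/FqP; rewrite -{2}(Tr_frob1 x) frob_sum /Defs.Tr; apply: eq_bigr => i _.
by rewrite -!exprM expn1 mulnC.
Qed.

Lemma Tr_frob_adjoint i x y : (i <= k)%N ->
  Tr (x ^+ (q ^ i) * y) = Tr (x * y ^+ (q ^ (k - i))).
Proof.
by move=> le_ik; rewrite -(Tr_frob i (x * _)) exprMn -exprM -expnD subnK ?frob_k.
Qed.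

(* x |-> Tr (x w) is a nonzero polynomial function of degree q^(k-1) < |L|. *)
Lemma Tr_nondegenerate w : (forall x, Tr (x * w) = 0) -> w = 0.
Proof.
move=> Tr_w0; apply/eqP; apply: contraT => w_neq0.
pose P := \sum_(i < k) (w ^+ (q ^ i))%:P * 'X^(q ^ i).
have [k' def_k] : exists k', k = k'.+1 by exists k.-1; rewrite prednK ?k_gt0.
have coefP : P`_(q ^ k') = w ^+ (q ^ k').
  rewrite coef_sum def_k big_ord_recr /= coefCM coefXn eqxx mulr1.
  rewrite big1 ?add0r // => i _; rewrite coefCM coefXn eqn_exp2l ?q_gt1 //.
  by rewrite gtn_eqF ?mulr0 ?ltn_ord.
have P_neq0 : P != 0.
  by apply: contraNneq (expf_neq0 (q ^ k') w_neq0) => P0; rewrite -coefP P0 coef0.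
have size_P : (size P <= (q ^ k').+1)%N.
  apply: leq_trans (size_sum _ _ _) _; apply/bigmax_leqP => i _.
  rewrite size_Cmul ?expf_neq0 // size_polyXn ltnS leq_pexp2l ?q_gt0 //.
  by rewrite -ltnS -def_k.
have roots_P : all (root P) (enum L).
  apply/allP => x _; apply/eqP; rewrite horner_sum -[RHS](Tr_w0 x).
  apply: eq_bigr => i _.
  by rewrite hornerCM hornerXn exprMn mulrC.
have := leq_trans (max_poly_roots P_neq0 roots_P (enum_uniq _)) size_P.
rewrite -cardE cardL def_k expnS ltnS leqNgt ltn_Pmull ?q_gt1 //.
by rewrite expn_gt0 q_gt0.
Qed.

(** * Orthogonality for the trace form *)

Local Notation form := (@Defs.form L q k).
Local Notation perp := (@Defs.perp L q k).
Local Notation subspace := (@is_subspace L q).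
Local Notation zerov := ((0 : L), (0 : L)).

Lemma formC u v : form u v = form v u.
Proof. by rewrite /Defs.form !(mulrC u.1) !(mulrC u.2). Qed.

Lemma form_addl u w v : form (vadd u w) v = form u v + form w v.
Proof. by rewrite /Defs.form -TrD !mulrDl addrACA. Qed.

Lemma form_addr u v w : form u (vadd v w) = form u v + form u w.
Proof. by rewrite formC form_addl !(formC u). Qed.

Lemma form_scalel c u v : c \in Fq L q -> form (vscale c u) v = c * form u v.
Proof. by move=> Fq_c; rewrite /Defs.form -TrZ //= -!mulrA -mulrDr. Qed.

Lemma form_scaler c u v : c \in Fq L q -> form u (vscale c v) = c * form u v.
Proof. by move=> Fq_c; rewrite formC form_scalel // formC. Qed.

Lemma form0l v : form zerov v = 0.
Proof. by rewrite /Defs.form !mul0r addr0 Tr0. Qed.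

Lemma perpP (A : {set L * L}) v :
  reflect (forall u, u \in A -> form u v = 0) (v \in perp A).
Proof. by rewrite inE; apply: (iffP forall_inP) => H u /H => [/eqP|->]. Qed.

Lemma subspaceN (A : {set L * L}) u v : subspace A -> u \in A -> v \in A ->
  vadd u (vscale (-1) v) \in A.
Proof. by case=> _ addA scaleA Au Av; rewrite addA ?scaleA ?FqN ?Fq1. Qed.

Lemma subspace0 : subspace [set zerov].
Proof.
split=> [|u v|c u _]; rewrite ?inE //.
  by move=> /eqP-> /eqP->; rewrite /vadd addr0.
by move=> /eqP->; rewrite /vscale mulr0.
Qed.

Lemma subspaceT : subspace setT.
Proof. by split=> *; rewrite inE. Qed.

Lemma subspaceI (A B : {set L * L}) : subspace A -> subspace B -> subspace (A :&: B).
Proof.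
case=> A0 addA scaleA [B0 addB scaleB]; split=> [|u v|c u Fq_c]; rewrite !inE ?A0 //.
  by case/andP=> Au Bu /andP[Av Bv]; rewrite addA ?addB.
by case/andP=> Au Bu; rewrite scaleA ?scaleB.
Qed.

Lemma perp_subspace (A : {set L * L}) : subspace (perp A).
Proof.
split=> [|u v /perpP Au /perpP Av|c u Fq_c /perpP Au]; apply/perpP => x Ax.
- by rewrite formC form0l.
- by rewrite form_addr Au ?Av ?addr0.
- by rewrite form_scaler ?Au ?mulr0.
Qed.

Lemma perpS (A B : {set L * L}) : A \subset B -> perp B \subset perp A.
Proof. by move/subsetP=> AB; apply/subsetP => v /perpP Bv; apply/perpP => u /AB/Bv. Qed.

Lemma sub_perpperp (A : {set L * L}) : A \subset perp (perp A).
Proof. by apply/subsetP => u Au; apply/perpP => v /perpP Av; rewrite formC Av. Qed.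

Lemma perp0 : perp [set zerov] = setT.
Proof.
by apply/setP => v; rewrite in_setT; apply/perpP => u /set1P->; rewrite form0l.
Qed.

Lemma perpT : perp setT = [set zerov].
Proof.
apply/setP => -[a b]; rewrite in_set1; apply/perpP/eqP => [Va|[-> ->] u _]; last first.
  by rewrite formC form0l.
have a0 : a = 0.
  apply: Tr_nondegenerate => x; have := Va (x, 0) (in_setT _).
  by rewrite /Defs.form mul0r addr0.
have b0 : b = 0.
  apply: Tr_nondegenerate => x; have := Va (0, x) (in_setT _).
  by rewrite /Defs.form mul0r add0r.
by rewrite a0 b0.
Qed.

Definition addline (A : {set L * L}) (w : L * L) : {set L * L} :=
  [set vadd x.1 (vscale x.2 w) | x in setX A (Fq L q)].

Lemma addline_subspace (A : {set L * L}) w : subspace A -> subspace (addline A w).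
Proof.
case=> A0 addA scaleA; split.
- apply/imsetP; exists (zerov, 0); first by rewrite inE A0 Fq0.
  by rewrite /vadd /vscale !mul0r addr0.
- move=> _ _ /imsetP[[a c] /setXP[Aa Fq_c] ->] /imsetP[[b d] /setXP[Ab Fq_d] ->].
  apply/imsetP; exists (vadd a b, c + d); first by rewrite inE /= addA ?FqD.
  by rewrite /vadd /vscale /=; congr (_, _); ring.
- move=> d _ Fq_d /imsetP[[a c] /setXP[Aa Fq_c] ->].
  apply/imsetP; exists (vscale d a, d * c); first by rewrite inE /= scaleA ?FqM.
  by rewrite /vadd /vscale /=; congr (_, _); ring.
Qed.

Lemma addline_min (A B : {set L * L}) w :
  subspace B -> A \subset B -> w \in B -> addline A w \subset B.
Proof.
case=> _ addB scaleB /subsetP AB Bw.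
apply/subsetP => _ /imsetP[[a c] /setXP[Aa Fq_c] ->].
by apply: addB; [apply: AB | apply: scaleB].
Qed.

Lemma sub_addline (A : {set L * L}) w : A \subset addline A w.
Proof.
apply/subsetP => a Aa; apply/imsetP; exists (a, 0); first by rewrite inE Aa Fq0.
by rewrite /vadd /vscale !mul0r !addr0 -surjective_pairing.
Qed.

Lemma mem_addline (A : {set L * L}) w : subspace A -> w \in addline A w.
Proof.
case=> A0 _ _; apply/imsetP; exists (zerov, 1); first by rewrite inE A0 Fq1.
by rewrite /vadd /vscale /= !mul1r !add0r -surjective_pairing.
Qed.

Lemma card_addline (A : {set L * L}) w : subspace A -> w \notin A ->
  #|addline A w| = (#|Fq L q| * #|A|)%N.
Proof.
move=> sA notAw; rewrite card_in_imset ?cardsX 1?mulnC //.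
move=> [a c] [b d] /setXP[/= Aa Fq_c] /setXP[/= Ab Fq_d].
case: a b w {Aa Ab notAw} (Aa) (Ab) (notAw) => [a1 a2] [b1 b2] [w1 w2] Aa Ab notAw.
rewrite /vadd /vscale /= => -[eq1 eq2].
have [eq_cd|neq_cd] := eqVneq c d.
  by move: eq1 eq2; rewrite eq_cd => /addIr-> /addIr->.
have cd_neq0 : c - d != 0 by rewrite subr_eq0.
have solve x y z : x + c * z = y + d * z -> z = (c - d)^-1 * (y + -1 * x).
  move=> E; apply: (mulfI cd_neq0); rewrite mulrA divff // mul1r.
  have -> : y = x + c * z - d * z by rewrite E addrK.
  ring.
case/negP: notAw; rewrite (solve _ _ _ eq1) (solve _ _ _ eq2).
case: (sA) => _ _ scaleA.
exact: scaleA (FqV (FqD Fq_c (FqN Fq_d))) (subspaceN sA Ab Aa).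
Qed.

(* Adjoining w to A multiplies |A| by |F_q| and divides |A^perp| by at most
   |F_q|, so |A| |A^perp| grows with A; it equals |V| for A = 0 and A = V. *)
Lemma card_perp_line (A : {set L * L}) w :
  (#|perp A| <= #|Fq L q| * #|perp A :&: [set v | form w v == 0%R]|)%N.
Proof.
pose r c := odflt zerov [pick v in perp A | form w v == c].
have rP v : v \in perp A ->
    r (form w v) \in perp A /\ form w (r (form w v)) = form w v.
  move=> Av; rewrite /r; case: pickP => [v' /andP[Av' /eqP wv']|no_v] //=.
  by have := no_v v; rewrite Av eqxx.
pose g v := (form w v, vadd v (vscale (-1) (r (form w v)))).
rewrite -cardsX -(card_in_imset (f := g)).
  apply: subset_leq_card; apply/subsetP => _ /imsetP[v Av ->].
  have [Ar wr] := rP v Av.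
  apply/setXP; split; first exact: Tr_Fq.
  rewrite in_setI (subspaceN (perp_subspace A) Av Ar) inE.
  by rewrite /= form_addr form_scaler ?FqN ?Fq1 // wr mulN1r addrN.
move=> [v1 v2] [u1 u2] _ _ [eq_wv]; rewrite -eq_wv /vadd /vscale /=.
by case: (r _) => r1 r2 /= /addIr-> /addIr->.
Qed.

Lemma card_perp_addline (A : {set L * L}) w : subspace A -> w \notin A ->
  (#|A| * #|perp A| <= #|addline A w| * #|perp (addline A w)|)%N.
Proof.
move=> sA notAw; set K := perp A :&: [set v | form w v == 0].
have K_perp : K \subset perp (addline A w).
  apply/subsetP => v /setIP[/perpP Av]; rewrite inE => /eqP wv.
  apply/perpP => _ /imsetP[[a c] /setXP[Aa Fq_c] ->].
  by rewrite form_addl form_scalel // wv mulr0 Av ?addr0.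
rewrite card_addline // mulnAC [leqLHS]mulnC leq_mul2r; apply/orP; right.
by apply: leq_trans (card_perp_line A w) _; rewrite leq_mul2l subset_leq_card ?orbT.
Qed.

Lemma card_perp_mono (A B : {set L * L}) : subspace A -> subspace B -> A \subset B ->
  (#|A| * #|perp A| <= #|B| * #|perp B|)%N.
Proof.
move=> sA sB AB.
have [n leBA] : exists n, (#|B| - #|A| <= n)%N by exists (#|B| - #|A|)%N.
elim: n A sA AB leBA => [|n IHn] A sA AB leBA.
  by rewrite (_ : A = B) //; apply/eqP; rewrite eqEcard AB -subn_eq0 -leqn0.
have [->//|neqAB] := eqVneq A B.
have [w Bw notAw] : exists2 w, w \in B & w \notin A.
  by apply/subsetPn; apply: contra neqAB => BA; rewrite eqEsubset AB.
have Aw_B := addline_min sB AB Bw.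
have lt_A_Aw : (#|A| < #|addline A w|)%N.
  apply: proper_card; rewrite properE sub_addline; apply/subsetPn.
  by exists w; first exact: mem_addline.
have le_Aw_B : (#|addline A w| <= #|B|)%N by rewrite subset_leq_card.
apply: leq_trans (card_perp_addline sA notAw) (IHn _ (addline_subspace w sA) Aw_B _).
by lia.
Qed.

Lemma card_perp (A : {set L * L}) : subspace A ->
  (#|A| * #|perp A|)%N = #|[set: L * L]|.
Proof.
move=> sA; apply/eqP; rewrite eqn_leq.
have := card_perp_mono sA subspaceT (subsetT A); rewrite perpT cards1 muln1 => ->.
have A0 : [set zerov] \subset A by rewrite sub1set; case: sA.
by have := card_perp_mono subspace0 sA A0; rewrite perp0 cards1 mul1n.
Qed.

Lemma perpK (A : {set L * L}) : subspace A -> perp (perp A) = A.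
Proof.
move=> sA; apply/eqP; rewrite eq_sym eqEcard sub_perpperp /=.
have perpA_gt0 : (0 < #|perp A|)%N.
  by apply/card_gt0P; exists zerov; case: (perp_subspace A).
by rewrite -(leq_pmul2l perpA_gt0) (card_perp (perp_subspace A)) -(card_perp sA) mulnC.
Qed.

Lemma perp_subset (A B : {set L * L}) : subspace A -> subspace B ->
  (perp B \subset perp A) = (A \subset B).
Proof.
move=> sA sB; apply/idP/idP; last exact: perpS.
by move/perpS; rewrite !perpK.
Qed.

Lemma Fq_linear0 (h : L * L -> L * L) : Fq_linear q h -> h zerov = zerov.
Proof.
case=> _ scaleh; have := scaleh 0 zerov Fq0; rewrite /vscale /= mul0r => ->.
by rewrite !mul0r.
Qed.

Lemma subspace_image (h : L * L -> L * L) (B : {set L * L}) :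
  Fq_linear q h -> subspace B -> subspace (h @: B).
Proof.
move=> lin_h [B0 addB scaleB]; have h0 := Fq_linear0 lin_h; case: lin_h => addh scaleh.
split=> [|_ _ /imsetP[u Bu ->] /imsetP[v Bv ->]|c _ Fq_c /imsetP[u Bu ->]].
- by rewrite -h0 imset_f.
- by rewrite -addh imset_f ?addB.
- by rewrite -scaleh ?imset_f ?scaleB.
Qed.

Lemma can_Fq_linear (h g : L * L -> L * L) :
  Fq_linear q h -> cancel h g -> cancel g h -> Fq_linear q g.
Proof.
case=> addh scaleh hK gK; split=> [u v|c u Fq_c]; apply: (can_inj hK).
  by rewrite addh !gK.
by rewrite scaleh // !gK.
Qed.

Lemma imset_can (h g : L * L -> L * L) (X : {set L * L}) :
  cancel h g -> g @: (h @: X) = X.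
Proof. by move=> hK; rewrite -imset_comp (eq_imset _ hK) imset_id. Qed.

Lemma linear_perp_correlation (h : L * L -> L * L) :
  Fq_linear q h -> bijective h -> correlation q (fun X => h @: perp X).
Proof.
move=> lin_h [g hK gK]; have lin_g := can_Fq_linear lin_h hK gK.
split=> [A _|A B sA sB /(imset_inj (can_inj hK)) eq_perp|B sB|A B sA sB].
- exact: subspace_image lin_h (perp_subspace A).
- by rewrite -(perpK sA) -(perpK sB) eq_perp.
- exists (perp (g @: B)); first exact: perp_subspace.
  by rewrite perpK ?imset_can //; apply: subspace_image.
- rewrite -perp_subset //; apply/idP/idP => [|/(imsetS g)]; first exact: imsetS.
  by rewrite !imset_can.
Qed.

(** * Correlations *)

Section Correlation.
Variable f : {set L * L} -> {set L * L}.
Hypothesis corr_f : correlation q f.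

Lemma correlationT : f setT = [set zerov].
Proof.
case: corr_f => sub_f _ surj_f ord_f; have [A sA fA] := surj_f _ subspace0.
apply/eqP; rewrite eqEsubset -{1}fA -(ord_f _ _ sA subspaceT) subsetT sub1set.
by case: (sub_f _ subspaceT).
Qed.

Lemma correlation0 : f [set zerov] = setT.
Proof.
case: corr_f => _ _ surj_f ord_f; have [B sB fB] := surj_f _ subspaceT.
apply/eqP; rewrite eqEsubset subsetT -fB -(ord_f _ _ subspace0 sB) sub1set.
by case: sB.
Qed.

Lemma correlation_cap0 (A B : {set L * L}) : subspace A -> subspace B ->
    (forall W, subspace W -> A \subset W -> B \subset W -> W = setT) ->
  f A :&: f B \subset [set zerov].
Proof.
case: corr_f => sub_f _ surj_f ord_f sA sB AB_span.
have [W sW fW] := surj_f _ (subspaceI (sub_f _ sA) (sub_f _ sB)).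
rewrite -fW (AB_span W) ?correlationT // (ord_f _ _ _ sW) // fW.
  exact: subsetIl.
exact: subsetIr.
Qed.

Lemma correlation_cup_full (A B J : {set L * L}) : subspace A -> subspace B ->
    A :&: B \subset [set zerov] -> subspace J -> f A \subset J -> f B \subset J ->
  J = setT.
Proof.
case: corr_f => sub_f _ surj_f ord_f sA sB AB0 sJ fAJ fBJ.
have [C sC fC] := surj_f _ sJ.
have C0 : C \subset [set zerov].
  apply: subset_trans AB0.
  by rewrite subsetI (ord_f _ _ sC sA) (ord_f _ _ sC sB) fC fAJ.
by apply/eqP; rewrite eqEsubset subsetT -fC -correlation0 -ord_f //; exact: subspace0.
Qed.

End Correlation.

(** * Graphs of q-polynomials *)

Lemma Ssub_subspace : subspace (Ssub L).
Proof.
split=> [|u v|c u _]; rewrite !inE /vadd /vscale //=.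
  by move=> /eqP-> /eqP->; rewrite addr0.
by move=> /eqP->; rewrite mulr0.
Qed.

Section Graphs.
Variable delta : nat.
Local Notation m := (k - delta)%N.
Local Notation Gsub := (@Gsub L q k delta).
Local Notation calG := (calG L q k delta).

Definition qpoly (a : m.+1.-tuple L) (x : L) : L :=
  \sum_(i < m.+1) tnth a i * x ^+ (q ^ i).

Lemma mem_Gsub a u : (u \in Gsub a) = (u.2 == qpoly a u.1).
Proof.
apply/imsetP/eqP => [[x _ ->] //|u2]; exists u.1 => //.
by rewrite {1}(surjective_pairing u) u2.
Qed.

Lemma card_Gsub a : #|Gsub a| = #|L|.
Proof. by rewrite card_imset // => x y []. Qed.

Lemma qpoly0 a : qpoly a 0 = 0.
Proof. by rewrite /qpoly big1 // => i _; rewrite frob0 mulr0. Qed.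

Lemma qpolyD a x y : qpoly a (x + y) = qpoly a x + qpoly a y.
Proof. by rewrite /qpoly -big_split; apply: eq_bigr => i _; rewrite frobD mulrDr. Qed.

Lemma qpolyZ a c x : c \in Fq L q -> qpoly a (c * x) = c * qpoly a x.
Proof.
move=> Fq_c; rewrite /qpoly mulr_sumr; apply: eq_bigr => i _.
by rewrite exprMn (Fq_frob _ Fq_c) mulrCA.
Qed.

Lemma Gsub_subspace a : subspace (Gsub a).
Proof.
split=> [|u v|c u Fq_c]; rewrite !mem_Gsub /=; first by rewrite qpoly0.
  by move=> /eqP-> /eqP->; rewrite qpolyD.
by move=> /eqP->; rewrite qpolyZ.
Qed.

Lemma Gsub_Ssub_cap a : Gsub a :&: Ssub L \subset [set zerov].
Proof.
apply/subsetP => -[x y]; rewrite !inE mem_Gsub /= => /andP[/eqP-> /eqP->].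
by rewrite qpoly0.
Qed.

Lemma Gsub_Ssub_span a W : subspace W -> Gsub a \subset W -> Ssub L \subset W ->
  W = setT.
Proof.
case=> _ addW _ /subsetP GW /subsetP SW; apply/setP => -[x y]; rewrite inE.
have -> : (x, y) = vadd (x, qpoly a x) (0, y - qpoly a x).
  by rewrite /vadd /= addr0 addrC subrK.
by apply: addW; [apply: GW; rewrite mem_Gsub | apply: SW; rewrite inE].
Qed.

Definition line_coefs (c : L) : m.+1.-tuple L :=
  [tuple if i == ord0 then c else 0 | i < m.+1].

Lemma qpoly_line c x : qpoly (line_coefs c) x = c * x.
Proof.
rewrite /qpoly big_ord_recl big1 ?addr0 => [|i _]; last by rewrite tnth_mktuple mul0r.
by rewrite tnth_mktuple expn0 expr1.
Qed.

Lemma Gsub_in_calG a : Gsub a \in calG.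
Proof. exact: imset_f. Qed.

Hypothesis le_delta_k : (delta <= k)%N.

Lemma ord_le_k (i : 'I_m.+1) : (i <= k)%N.
Proof. by rewrite -ltnS (leq_trans (ltn_ord i)) // ltnS leq_subr. Qed.

(* The adjoint of qpoly a for the trace form, see Tr_frob_adjoint. *)
Definition qpoly_adj (a : m.+1.-tuple L) (v : L) : L :=
  \sum_(i < m.+1) (tnth a i * v) ^+ (q ^ (k - i)).

Lemma perp_Gsub a : perp (Gsub a) = [set (- qpoly_adj a v, v) | v : L].
Proof.
apply/esym/eqP; rewrite eqEcard; apply/andP; split.
  apply/subsetP => _ /imsetP[v _ ->]; apply/perpP => u.
  rewrite mem_Gsub /Defs.form /= => /eqP->.
  apply/eqP; rewrite mulrN TrD TrN addrC subr_eq0 /qpoly mulr_suml mulr_sumr !Tr_sum.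
  apply/eqP; apply: eq_bigr => i _.
  by rewrite -mulrA mulrCA Tr_frob_adjoint ?ord_le_k.
have L_gt0 : (0 < #|L|)%N by apply/card_gt0P; exists 0.
have := card_perp (Gsub_subspace a); rewrite card_Gsub cardsT card_prod => /eqP.
by rewrite eqn_pmul2l // => /eqP->; rewrite card_imset // => v w [_].
Qed.

Definition frob_swap (u : L * L) : L * L := (u.2 ^+ (q ^ delta), - u.1).
Definition frob_swap_inv (u : L * L) : L * L := (- u.2, u.1 ^+ (q ^ m)).

Lemma frob_swapK : cancel frob_swap frob_swap_inv.
Proof. by case=> a b; rewrite /frob_swap /frob_swap_inv /= opprK frob_kB. Qed.

Lemma frob_swap_invK : cancel frob_swap_inv frob_swap.
Proof.
by case=> a b; rewrite /frob_swap /frob_swap_inv /= opprK -exprM -expnD subnK ?frob_k.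
Qed.

Lemma frob_swap_bijective : bijective frob_swap.
Proof. exact: Bijective frob_swapK frob_swap_invK. Qed.

Lemma frob_swap_Fq_linear : Fq_linear q frob_swap.
Proof.
split=> [u v|c u Fq_c]; rewrite /frob_swap /vadd /vscale /=.
  by rewrite frobD opprD.
by rewrite exprMn (Fq_frob _ Fq_c) mulrN.
Qed.

Definition dual_coefs (a : m.+1.-tuple L) : m.+1.-tuple L :=
  [tuple tnth a (rev_ord j) ^+ (q ^ (k - rev_ord j)) | j < m.+1].

Definition undual_coefs (c : m.+1.-tuple L) : m.+1.-tuple L :=
  [tuple tnth c (rev_ord j) ^+ (q ^ j) | j < m.+1].

Lemma undual_coefsK : cancel undual_coefs dual_coefs.
Proof.
by move=> c; apply: eq_from_tnth => j; rewrite !tnth_mktuple rev_ordK frob_kB ?ord_le_k.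
Qed.

Lemma qpoly_adj_dual a v : qpoly_adj a v = qpoly (dual_coefs a) (v ^+ (q ^ delta)).
Proof.
rewrite /qpoly (reindex_inj rev_ord_inj); apply: eq_bigr => i _.
rewrite tnth_mktuple rev_ordK exprMn -exprM -expnD; congr (_ * v ^+ (q ^ _)).
by have := ltn_ord i; rewrite /= subSS; lia.
Qed.

Lemma frob_swap_perp_Gsub a : frob_swap @: perp (Gsub a) = Gsub (dual_coefs a).
Proof.
rewrite perp_Gsub; apply/setP => u; rewrite mem_Gsub.
apply/imsetP/eqP => [[_ /imsetP[v _ ->] ->]|u2].
  by rewrite /= opprK qpoly_adj_dual.
exists (- qpoly_adj a (u.1 ^+ (q ^ m)), u.1 ^+ (q ^ m)); first exact: imset_f.
rewrite /frob_swap /= opprK qpoly_adj_dual -exprM -expnD subnK // frob_k -u2.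
exact: surjective_pairing.
Qed.

Lemma frob_swap_perp_calG X : X \in calG -> frob_swap @: perp X \in calG.
Proof. by case/imsetP=> a _ ->; rewrite frob_swap_perp_Gsub Gsub_in_calG. Qed.

Lemma frob_swap_perp_calG_eq : [set frob_swap @: perp X | X in calG] = calG.
Proof.
apply/setP => Y; apply/imsetP/idP => [[X GX ->]|/imsetP[c _ ->]].
  exact: frob_swap_perp_calG.
exists (Gsub (undual_coefs c)); first exact: Gsub_in_calG.
by rewrite frob_swap_perp_Gsub undual_coefsK.
Qed.

Lemma correlation_fix_Ssub f : correlation q f -> f @: calG = calG ->
  f (Ssub L) = Ssub L.
Proof.
move=> corr_f fG; have [sub_f _ _ _] := corr_f.
have fGsub c : exists a, f (Gsub a) = Gsub (line_coefs c).
  have := Gsub_in_calG (line_coefs c); rewrite -fG.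
  by case/imsetP=> _ /imsetP[a _ ->] ->; exists a.
have fS_S : f (Ssub L) \subset Ssub L.
  apply/subsetP => u fSu; rewrite inE; apply: contraT => u1_neq0.
  have [a fGa] := fGsub (u.2 / u.1).
  have : u \in [set zerov].
    apply: (subsetP (correlation_cap0 corr_f Ssub_subspace (Gsub_subspace a) _)).
      by move=> W sW SW GW; apply: Gsub_Ssub_span sW GW SW.
    by rewrite in_setI fSu fGa mem_Gsub qpoly_line divfK ?eqxx.
  by rewrite inE => /eqP u0; rewrite u0 eqxx in u1_neq0.
pose J := [set u : L * L | (0, u.2) \in f (Ssub L)].
have [a fGa] := fGsub 0.
have JT : J = setT.
  apply: (correlation_cup_full corr_f Ssub_subspace (Gsub_subspace a)).
  - by rewrite setIC Gsub_Ssub_cap.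
  - have [fS0 addfS scalefS] := sub_f _ Ssub_subspace.
    split=> [|u v|c u Fq_c]; rewrite !inE //.
      by move=> /(addfS _ _) fSv /fSv; rewrite /vadd /= addr0.
    by move=> /(scalefS _ _ Fq_c); rewrite /vscale /= mulr0.
  - apply/subsetP => u fSu; rewrite inE.
    by have := subsetP fS_S u fSu; rewrite inE => /eqP <-; rewrite -surjective_pairing.
  - apply/subsetP => u; rewrite fGa mem_Gsub qpoly_line mul0r inE => /eqP->.
    by case: (sub_f _ Ssub_subspace).
apply/eqP; rewrite eqEsubset fS_S; apply/subsetP => -[x y]; rewrite inE /= => /eqP->.
by have := in_setT (x, y); rewrite -JT inE.
Qed.

End Graphs.
End FiniteField.

Theorem mainTheorem7 (p e k delta : nat) (L : finFieldType) :
  prime p -> (0 < e)%N -> #|L| = ((p ^ e) ^ k)%N ->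
  (1 <= delta)%N -> (delta <= k)%N ->
  let q := (p ^ e)%N in
  let G := calG L q k delta in
  (exists phi : L * L -> L * L,
      [/\ Fq_linear q phi, bijective phi,
          (forall X, X \in G -> phi @: perp q k X \in G) &
          [set phi @: perp q k X | X in G] = G])
  /\ (exists f, correlation q f /\ f @: G = G)
  /\ (forall f, correlation q f -> f @: G = G -> f (Ssub L) = Ssub L).
Proof.
move=> p_prime e_gt0 cardL _ le_delta_k q G; rewrite {}/G {}/q.
have swap_lin := frob_swap_Fq_linear p_prime cardL delta.
have swap_bij := frob_swap_bijective cardL le_delta_k.
have swap_G := frob_swap_perp_calG_eq p_prime e_gt0 cardL le_delta_k.
split; [|split].
- by exists (frob_swap p e delta); split=> //; exact: frob_swap_perp_calG.
- exists (fun X => frob_swap p e delta @: perp (p ^ e) k X); split=> //.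
  exact: linear_perp_correlation.
- exact: correlation_fix_Ssub.
Qed.
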